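(* Let $n\ge1$ and $\mathbb{P}\in\mathcal{P}_n$. For every $T\in\mathbb{R}_{++}^{2\times n}$ there exists a sequence $(T_k)_{k\ge1}\subset\mathbb{R}_{++}^{2\times n}$, $T_k=(T_{k,ij})$, such that $\mathbf{P}_{\mathbf{z}\sim\mathbb{P}}[z_j=T_{k,1j}/T_{k,2j}]=0$ for all $j\in[n]$ and all $k$, and \[ R_n(\mathbb{P},T)=\lim_{k\to\infty}R_n(\mathbb{P},T_k). \]
   Context: Scheduling on two machines with $n$ tasks. A processing-time matrix is $T\in\mathbb{R}_{++}^{2\times n}$; an allocation is $X\in\{0,1\}^{2\times n}$ with $X_{1j}+X_{2j}=1$; makespan $M(X,T)=\max_{i\in\{1,2\}}\sum_jX_{ij}T_{ij}$; $M^*(T)=\min_XM(X,T)$. $\mathcal{P}_n$ is the set of Borel probability measures on $\mathbb{R}^n$ supported in $\mathbb{R}_{++}^n$. For $\mathbb{P}\in\mathcal{P}_n$, algorithm $\mathcal{A}^{\mathbb{P}}$ draws $\mathbf{z}\sim\mathbb{P}$ and sends task $j$ to machine 1 iff $T_{1j}/T_{2j}<z_j$ (else to machine 2); $M(\mathbb{P},T)$ is the expected makespan of this random allocation and $R_n(\mathbb{P},T)=M(\mathbb{P},T)/M^*(T)$. *)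

From HB Require Import structures.
From mathcomp Require Import all_boot all_order all_algebra.
From mathcomp Require Import all_classical all_reals all_analysis.
Set Implicit Arguments. Unset Strict Implicit. Unset Printing Implicit Defensive.
Import Order.TTheory GRing.Theory Num.Theory.
Local Open Scope ring_scope.
Local Open Scope classical_set_scope.

(* Machines are indexed by 'I_2: mach1 = machine 1 (row 0), mach2 = machine 2 (row 1). *)
Definition mach1 : 'I_2 := @Ordinal 2 0 isT.
Definition mach2 : 'I_2 := @Ordinal 2 1 isT.

Section Sched.
Variables (R : realType) (n : nat).

Definition pos_matrix (T : 'M[R]_(2, n)) : Prop := forall i j, 0 < T i j.

(* An allocation X in {0,1}^{2 x n} with X_1j + X_2j = 1 is encoded by
   x : {ffun 'I_n -> bool}, x j = true iff X_1j = 1 (task j on machine 1). *)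
Definition makespan (x : {ffun 'I_n -> bool}) (T : 'M[R]_(2, n)) : R :=
  Num.max (\sum_(j < n | x j) T mach1 j) (\sum_(j < n | ~~ x j) T mach2 j).

Definition opt_makespan (T : 'M[R]_(2, n)) : R :=
  \big[Num.min / makespan [ffun => true] T]_(x : {ffun 'I_n -> bool}) makespan x T.

Definition alloc (T : 'M[R]_(2, n)) (z : n.-tuple R) : {ffun 'I_n -> bool} :=
  [ffun j => T mach1 j / T mach2 j < tnth z j].

(* P in P_n : a Borel probability on R^n (product sigma-algebra on n-tuples)
   supported in R_{++}^n *)
Definition supported_pos (P : probability (n.-tuple R) R) : Prop :=
  P [set z : n.-tuple R | forall j, 0 < tnth z j] = 1%E.

Definition exp_makespan (P : probability (n.-tuple R) R) (T : 'M[R]_(2, n)) : \bar R :=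
  (\int[P]_z (makespan (alloc T z) T)%:E)%E.

Definition Rn_ratio (P : probability (n.-tuple R) R) (T : 'M[R]_(2, n)) : \bar R :=
  (exp_makespan P T * ((opt_makespan T)^-1)%:E)%E.

End Sched.

From HB Require Import structures.
From mathcomp Require Import all_boot all_order all_algebra.
From mathcomp Require Import all_classical all_reals all_analysis.
From mathcomp Require Import lra.
Set Implicit Arguments. Unset Strict Implicit. Unset Printing Implicit Defensive.
Import Order.TTheory GRing.Theory Num.Theory.
Import numFieldNormedType.Exports measurable_realfun.
Local Open Scope ring_scope.
Local Open Scope classical_set_scope.

(* Raise each T_1j to s T_2j with s slightly above the ratio T_1j/T_2j. Since the
   test T_1j/T_2j < z_j is open on the right, for every fixed z the allocation is
   eventually unchanged, while every makespan, hence M*(T), moves by at most the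
   perturbation; the expected makespans converge by bounded convergence. The new
   ratios can be taken off the atoms of the law of z_j: these atoms are countable,
   whereas every nonempty open interval is not. *)

Section shift_bounds.
Variable R : realDomainType.

Lemma maxr_shiftl (a a' b e : R) : a <= a' <= a + e -> 0 <= e ->
  Num.max a b <= Num.max a' b <= Num.max a b + e.
Proof.
move=> /andP[aa' a'e] e0; rewrite !maxEle.
by case: (leP a b) => ?; case: (leP a' b) => ?; apply/andP; split; lra.
Qed.

Lemma minr_shift (a a' b b' e : R) : a <= a' <= a + e -> b <= b' <= b + e ->
  Num.min a b <= Num.min a' b' <= Num.min a b + e.
Proof.
move=> /andP[aa' a'e] /andP[bb' b'e]; rewrite !minEle.
by case: (leP a b) => ?; case: (leP a' b') => ?; apply/andP; split; lra.
Qed.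

Lemma bigmin_shift (I : finType) (x0 y0 e : R) (F G : I -> R) :
  x0 <= y0 <= x0 + e -> (forall i, F i <= G i <= F i + e) ->
  \big[Num.min/x0]_i F i <= \big[Num.min/y0]_i G i <= \big[Num.min/x0]_i F i + e.
Proof. by move=> xy FG; elim/big_rec2: _ => // i x y _; apply: minr_shift. Qed.

Lemma sumr_le_full (I : finType) (P : pred I) (F : I -> R) :
  (forall i, 0 <= F i) -> \sum_(i | P i) F i <= \sum_i F i.
Proof. by move=> F0; rewrite [leRHS](bigID P) /= lerDl sumr_ge0. Qed.

End shift_bounds.

Lemma cvg_squeeze_shift (R : realFieldType) (u e : nat -> R) (l : R) :
  (forall k, l <= u k <= l + e k) -> e @ \oo --> 0 -> u @ \oo --> l.
Proof.
move=> ule e0; apply: (squeeze_cvgr (f := fun=> l) (h := fun k => l + e k)).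
- exact: nearW.
- exact: cvg_cst.
- by rewrite -[X in _ --> X]addr0; apply: cvgD => //; exact: cvg_cst.
Qed.

Lemma near_lt_from_above (I : Type) (F : set_system I) (FF : Filter F)
    (R : realFieldType) (s : I -> R) (r z : R) :
  (forall k, r < s k) -> s @ F --> r -> \forall k \near F, (s k < z) = (r < z).
Proof.
move=> rs sr; have [rz|zr] := ltP r z.
  exact: cvgr_lt _ sr _ rz.
by apply: nearW => k; apply/negbTE; rewrite -leNgt (le_trans zr) ?ltW.
Qed.

Lemma exists_null_fiber d (T : measurableType d) (R : realType)
    (P : probability T R) (X : {RV P >-> R}) (a b : R) :
  a < b -> exists2 x, a < x < b & P (X @^-1` [set x]) = 0%E.
Proof.
move=> ab; apply: contrapT => no_null.
have atoms : `]a, b[ `<=` [set r | 0 < pmf X r].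
  move=> r; rewrite /= in_itv /= => rab; rewrite lt_def pmf_ge0 andbT.
  apply/eqP => pmf0; apply: no_null; exists r => //.
  by rewrite -[LHS]fineK ?fin_num_measure // -/(pmf X r) pmf0.
have := countable_lebesgue_measure0
  (sub_countable (subset_card_le atoms) (pmf_gt0_countable X)).
by rewrite lebesgue_measure_itv /= lte_fin ab -EFinD => -[] /eqP; rewrite subr_eq0 gt_eqF.
Qed.

Lemma exists_null_coordinate (R : realType) (n : nat)
    (P : probability (n.-tuple R) R) (j : 'I_n) (a b : R) :
  a < b -> exists2 x, a < x < b & P [set z | tnth z j = x] = 0%E.
Proof.
exact: (@exists_null_fiber _ _ _ P (mfun_Sub (mem_set (@measurable_tnth _ R n j)))).
Qed.

Lemma bounded_convergence d (T : measurableType d) (R : realType)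
    (mu : {finite_measure set T -> \bar R}) (f : nat -> T -> R) (g : T -> R) (C : R) :
  (forall k, measurable_fun setT (f k)) -> measurable_fun setT g ->
  (forall k x, `|f k x| <= C) -> (forall x, f ^~ x @ \oo --> g x) ->
  (\int[mu]_x (f k x)%:E)%E @[k --> \oo] --> (\int[mu]_x (g x)%:E)%E.
Proof.
move=> mf mg fC fg.
have mfE k : measurable_fun setT (fun x => (f k x)%:E) by exact/measurable_EFinP.
have mgE : measurable_fun setT (EFin \o g) by exact/measurable_EFinP.
have fgE : {ae mu, forall x, setT x -> (f k x)%:E @[k --> \oo] --> (g x)%:E}.
  by apply: aeW => x _; apply/fine_cvgP; split; [exact: nearW | exact: fg].
have fCE : {ae mu, forall x k, setT x -> (`|(f k x)%:E| <= (EFin \o cst C) x)%E}.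
  by apply: aeW => x k _; rewrite /= lee_fin.
have intC := finite_measure_integrable_cst mu C measurableT.
by have [] := dominated_convergence measurableT mfE mgE fgE intC fCE.
Qed.

Section makespan.
Variables (R : realType) (n : nat).
Implicit Types (T U : 'M[R]_(2, n)) (x : {ffun 'I_n -> bool}).

Lemma makespan_row1_shift T U (e : 'I_n -> R) x :
  (forall j, T mach1 j <= U mach1 j <= T mach1 j + e j) ->
  (forall j, U mach2 j = T mach2 j) ->
  makespan x T <= makespan x U <= makespan x T + \sum_j e j.
Proof.
move=> U1 U2; have e0 j : 0 <= e j by have /andP[+ +] := U1 j; lra.
rewrite /makespan (eq_bigr _ (fun j _ => U2 j)); apply: maxr_shiftl; last first.
  exact: sumr_ge0.
apply/andP; split; first by apply: ler_sum => j _; case/andP: (U1 j).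
apply: le_trans (_ : \sum_(j | x j) (T mach1 j + e j) <= _).
  by apply: ler_sum => j _; case/andP: (U1 j).
by rewrite big_split lerD2l sumr_le_full.
Qed.

Lemma opt_makespan_row1_shift T U (e : 'I_n -> R) :
  (forall j, T mach1 j <= U mach1 j <= T mach1 j + e j) ->
  (forall j, U mach2 j = T mach2 j) ->
  opt_makespan T <= opt_makespan U <= opt_makespan T + \sum_j e j.
Proof. by move=> U1 U2; apply: bigmin_shift => *; apply: makespan_row1_shift. Qed.

Lemma makespan_le_sum T x : pos_matrix T ->
  makespan x T <= \sum_j T mach1 j + \sum_j T mach2 j.
Proof.
move=> Tpos; have row_ge0 i j : 0 <= T i j by exact: ltW.
rewrite /makespan ge_max; apply/andP; split.
  by rewrite ler_wpDr ?sumr_ge0 ?sumr_le_full.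
by rewrite ler_wpDl ?sumr_ge0 ?sumr_le_full.
Qed.

Lemma measurable_makespan_alloc T :
  measurable_fun setT (fun z : n.-tuple R => makespan (alloc T z) T).
Proof.
have mlt j : measurable_fun setT (fun z : n.-tuple R => alloc T z j).
  by under eq_fun do rewrite ffunE; apply: measurable_fun_ltr => //; exact: measurable_tnth.
rewrite /makespan; apply: measurable_maxr.
  under eq_fun => z do rewrite big_mkcond /=.
  by apply: measurable_sum => j; exact: measurable_fun_ifT.
under eq_fun => z do rewrite big_mkcond /=.
by apply: measurable_sum => j; apply: measurable_fun_ifT => //; exact: measurableT_comp.
Qed.

Hypothesis n_gt0 : (0 < n)%N.

Lemma makespan_gt0 T x : pos_matrix T -> 0 < makespan x T.
Proof.
move=> Tpos; pose j0 := Ordinal n_gt0.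
have sum_gt0 i (P : pred 'I_n) : P j0 -> 0 < \sum_(j | P j) T i j.
  by move=> Pj0; rewrite (bigD1 j0) //= ltr_pwDl // sumr_ge0 // => j _; exact: ltW.
rewrite /makespan lt_max; apply/orP.
by case: (boolP (x j0)) => xj0; [left|right]; apply: sum_gt0.
Qed.

Lemma opt_makespan_gt0 T : pos_matrix T -> 0 < opt_makespan T.
Proof.
move=> Tpos; rewrite /opt_makespan.
elim/big_rec: _ => [|x y _ y0]; first exact: makespan_gt0.
by rewrite lt_min y0 makespan_gt0.
Qed.

End makespan.

Section ratios.
Variables (R : realType) (n : nat).
Implicit Types (T : 'M[R]_(2, n)) (s : 'I_n -> R).

Definition ratio T j := T mach1 j / T mach2 j.

Definition set_ratios T s : 'M[R]_(2, n) :=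
  \matrix_(i, j) (if i == mach1 then s j * T mach2 j else T mach2 j).

Lemma set_ratios_mach1 T s j : set_ratios T s mach1 j = s j * T mach2 j.
Proof. by rewrite mxE. Qed.

Lemma set_ratios_mach2 T s j : set_ratios T s mach2 j = T mach2 j.
Proof. by rewrite mxE. Qed.

Lemma ratio_set_ratios T s j : T mach2 j != 0 -> ratio (set_ratios T s) j = s j.
Proof. by move=> T2j; rewrite /ratio set_ratios_mach1 set_ratios_mach2 mulfK. Qed.

End ratios.

Section ratios_from_above.
Variables (R : realType) (n : nat) (P : probability (n.-tuple R) R).
Variables (T : 'M[R]_(2, n)) (s : nat -> 'I_n -> R).
Hypotheses (n_gt0 : (0 < n)%N) (Tpos : pos_matrix T).
Hypothesis s_near : forall k j, ratio T j < s k j < ratio T j + harmonic k.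

Let Tk k := set_ratios T (s k).

Lemma pos_set_ratios k : pos_matrix (Tk k).
Proof.
move=> i j; rewrite mxE; case: ifP => _ //.
have /andP[rs _] := s_near k j.
by rewrite mulr_gt0 // (lt_trans _ rs) // divr_gt0.
Qed.

Lemma set_ratios_row1_shift k j :
  T mach1 j <= Tk k mach1 j <= T mach1 j + harmonic k * T mach2 j.
Proof.
have T1E : T mach1 j = ratio T j * T mach2 j by rewrite divfK // gt_eqF.
rewrite set_ratios_mach1 T1E -mulrDl !ler_pM2r //.
by have /andP[/ltW -> /ltW ->] := s_near k j.
Qed.

Lemma cvg_row1_shift : (\sum_j harmonic k * T mach2 j) @[k --> \oo] --> (0 : R).
Proof.
under eq_fun do rewrite -mulr_sumr.
by apply: cvg_trans (cvgM cvg_harmonic (cvg_cst _)) _; rewrite mul0r.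
Qed.

Lemma cvg_opt_makespan_set_ratios :
  opt_makespan (Tk k) @[k --> \oo] --> opt_makespan T.
Proof.
apply: cvg_squeeze_shift cvg_row1_shift => k.
apply: opt_makespan_row1_shift => j; [exact: set_ratios_row1_shift | exact: set_ratios_mach2].
Qed.

Lemma near_alloc_set_ratios z : \forall k \near \oo, alloc (Tk k) z = alloc T z.
Proof.
have s_cvg j : s ^~ j @ \oo --> ratio T j.
  apply: cvg_squeeze_shift cvg_harmonic => k.
  by have /andP[/ltW -> /ltW ->] := s_near k j.
have : \forall k \near \oo, forall j, (s k j < tnth z j) = (ratio T j < tnth z j).
  apply: filter_forall => j; apply: near_lt_from_above (s_cvg j) => k.
  by case/andP: (s_near k j).
apply: filterS => k sk; apply/ffunP => j.
by rewrite !ffunE -sk -/(ratio (Tk k) j) ratio_set_ratios ?gt_eqF.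
Qed.

Lemma cvg_makespan_set_ratios z :
  makespan (alloc (Tk k) z) (Tk k) @[k --> \oo] --> makespan (alloc T z) T.
Proof.
apply: cvg_trans (near_eq_cvg (f := fun k => makespan (alloc T z) (Tk k)) _) _.
  by apply: filterS (near_alloc_set_ratios z) => k ->.
apply: cvg_squeeze_shift cvg_row1_shift => k.
apply: makespan_row1_shift => j; [exact: set_ratios_row1_shift | exact: set_ratios_mach2].
Qed.

Lemma cvg_exp_makespan_set_ratios :
  exp_makespan P (Tk k) @[k --> \oo] --> exp_makespan P T.
Proof.
pose C := \sum_j T mach1 j + \sum_j T mach2 j + \sum_j T mach2 j.
apply: (bounded_convergence (C := C)).
- by move=> k; exact: measurable_makespan_alloc.
- exact: measurable_makespan_alloc.
- move=> k z; rewrite ger0_norm; last exact/ltW/makespan_gt0/pos_set_ratios.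
  have /andP[_ /le_trans->//] := makespan_row1_shift (alloc (Tk k) z)
    (set_ratios_row1_shift k) (set_ratios_mach2 T (s k)).
  rewrite lerD ?makespan_le_sum // -mulr_sumr ler_piMl ?sumr_ge0 // => [j _|].
    exact: ltW.
  by rewrite /= invf_le1 ?ler1n ?ltr0n.
- exact: cvg_makespan_set_ratios.
Qed.

Lemma cvg_Rn_ratio_set_ratios : Rn_ratio P (Tk k) @[k --> \oo] --> Rn_ratio P T.
Proof.
have opt_neq0 : opt_makespan T != 0 by rewrite gt_eqF // opt_makespan_gt0.
apply: cvgeM; last 2 first.
- exact: cvg_exp_makespan_set_ratios.
- apply/fine_cvgP; split; first exact: nearW.
  by apply: cvgV => //; exact: cvg_opt_makespan_set_ratios.
(* the second factor is finite and nonzero, so the product is always defined *)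
have [fin|nfin] := boolP (exp_makespan P T \is a fin_num).
  exact: mule_def_fin.
by apply: mule_def_infty_neq0; rewrite // eqe invr_eq0.
Qed.

End ratios_from_above.

Theorem lemma2 (R : realType) (n : nat) (P : probability (n.-tuple R) R) :
  (0 < n)%N -> supported_pos P ->
  forall T : 'M[R]_(2, n), pos_matrix T ->
  exists Tk : nat -> 'M[R]_(2, n),
    (forall k, pos_matrix (Tk k)) /\
    (forall k (j : 'I_n),
        P [set z : n.-tuple R | tnth z j = Tk k mach1 j / Tk k mach2 j] = 0%E) /\
    ((fun k => Rn_ratio P (Tk k)) @ \oo --> Rn_ratio P T).
Proof.
move=> n_gt0 _ T Tpos.
have /choice[s s_spec] : forall kj : nat * 'I_n, exists x,
    ratio T kj.2 < x < ratio T kj.2 + harmonic kj.1 /\ P [set z | tnth z kj.2 = x] = 0%E.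
  move=> [k j].
  have r_lt : ratio T j < ratio T j + harmonic k by rewrite ltrDl harmonic_gt0.
  by have [x x_near x_null] := exists_null_coordinate P j r_lt; exists x.
pose sk k j := s (k, j).
have sk_near k j : ratio T j < sk k j < ratio T j + harmonic k := (s_spec (k, j)).1.
exists (fun k => set_ratios T (sk k)); split; [|split].
- exact: pos_set_ratios.
- by move=> k j; rewrite -/(ratio _ j) ratio_set_ratios ?gt_eqF //; exact: (s_spec (k, j)).2.
- exact: cvg_Rn_ratio_set_ratios.
Qed.
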